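(* There is a functor $F:\mathbf{ShvFP}\to\mathbf{Pseud}$ that sends a sheaf $\mathcal{S}$ on $(X,\mathcal{T}_X)$ to its space of assignments $\prod_{U\in\mathcal{T}_X}\mathcal{S}(U)$ with the assignment pseudometric, and sends a morphism $m:\mathcal{S}\to\mathcal{R}$ along $f:(X,\mathcal{T}_X)\to(Y,\mathcal{T}_Y)$ to the map $Fm$ given by $(Fm(a))(V)=m_V(a(f^{-1}(V)))$ for $V\in\mathcal{T}_Y$; in particular each $Fm$ is continuous.
   Context: A sheaf of pseudometric spaces on a topological space $(X,\mathcal{T})$ is a sheaf of sets $\mathcal{S}$ with a pseudometric $d_U$ on each $\mathcal{S}(U)$ making all restriction maps continuous. An assignment is any $a\in\prod_{U\in\mathcal{T}}\mathcal{S}(U)$, and the assignment pseudometric is $D(a,b)=\sup_{U\in\mathcal{T}}d_U(a(U),b(U))$. $\mathbf{Pseud}$ is the category of pseudometric spaces with continuous maps (for the induced topologies). $\mathbf{ShvFP}$: objects are sheaves of pseudometric spaces on finite topological spaces; a morphism $\mathcal{S}\to\mathcal{R}$, with $\mathcal{S}$ on $(X,\mathcal{T}_X)$ and $\mathcal{R}$ on $(Y,\mathcal{T}_Y)$, is a continuous map $f:X\to Y$ with continuous component maps $m_U:\mathcal{S}(f^{-1}(U))\to\mathcal{R}(U)$, $U\in\mathcal{T}_Y$, such that $\mathcal{R}(U\subseteq V)\circ m_V=m_U\circ\mathcal{S}(f^{-1}(U)\subseteq f^{-1}(V))$ for all $U\subseteq V$ in $\mathcal{T}_Y$; composition of $m$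 along $f$ with $n$ along $g$ is along $g\circ f$ with components $(n\circ m)_U=n_U\circ m_{g^{-1}(U)}$. *)

From HB Require Import structures.
From mathcomp Require Import all_boot all_order all_algebra.
From mathcomp Require Import reals.
Set Implicit Arguments. Unset Strict Implicit. Unset Printing Implicit Defensive.
Import Order.TTheory GRing.Theory Num.Theory.
Local Open Scope ring_scope.

Definition is_topology (X : finType) (T : {set {set X}}) : Prop :=
  [/\ set0 \in T, setT \in T,
      (forall U V, U \in T -> V \in T -> U :|: V \in T) &
      (forall U V, U \in T -> V \in T -> U :&: V \in T)].

Record ftop := FTop {
  pt :> finType;
  top : {set {set pt}};
  top_ax : is_topology top }.

Definition opens (X : ftop) := {U : {set X} | U \in top X}.

Section Pseudo.
Variable R : realType.

Definition is_pseudometric (A : Type) (d : A -> A -> R) : Prop :=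
  [/\ (forall x, d x x = 0), (forall x y, 0 <= d x y),
      (forall x y, d x y = d y x) &
      (forall x y z, d x z <= d x y + d y z)].

Definition popen (A : Type) (d : A -> A -> R) (O : A -> Prop) : Prop :=
  forall x, O x -> exists2 e : R, 0 < e & forall y, d x y < e -> O y.

Definition pcontinuous (A B : Type) (dA : A -> A -> R) (dB : B -> B -> R)
  (h : A -> B) : Prop :=
  forall O : B -> Prop, popen dB O -> popen dA (fun x => O (h x)).

End Pseudo.

(* Sections are given for every subset, but only the values on open sets
   matter: all axioms are imposed on open sets only. *)
Record sheafFP (R : realType) := SheafFP {
  base : ftop;
  sec : {set base} -> Type;
  res : forall U V : {set base}, U \subset V -> sec V -> sec U;
  dist : forall U : {set base}, sec U -> sec U -> R;
  res_id : forall (U : {set base}) (h : U \subset U), U \in top base ->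
    forall s, res h s = s;
  res_comp : forall U V W : {set base}, forall (hUV : U \subset V) (hVW : V \subset W)
      (hUW : U \subset W),
    U \in top base -> V \in top base -> W \in top base ->
    forall s, res hUV (res hVW s) = res hUW s;
  sheaf_loc : forall (U : {set base}) (C : {set {set base}}),
    U \in top base -> C \subset top base -> \bigcup_(V in C) V = U ->
    forall s t : sec U,
      (forall (V : {set base}) (hVU : V \subset U), V \in C -> res hVU s = res hVU t) ->
      s = t;
  sheaf_glue : forall (U : {set base}) (C : {set {set base}}),
    U \in top base -> C \subset top base -> \bigcup_(V in C) V = U ->
    forall fam : forall V : {set base}, V \in C -> sec V,
      (forall (V W : {set base}) (hV : V \in C) (hW : W \in C)
              (h1 : V :&: W \subset V) (h2 : V :&: W \subset W),
          res h1 (fam V hV) = res h2 (fam W hW)) ->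
      exists s : sec U, forall (V : {set base}) (hV : V \in C) (hVU : V \subset U),
        res hVU s = fam V hV;
  dist_pseudo : forall U : {set base}, U \in top base -> is_pseudometric (@dist U);
  res_cont : forall (U V : {set base}) (h : U \subset V), U \in top base -> V \in top base ->
    pcontinuous (@dist V) (@dist U) (res h) }.

Arguments res {R} s0 {U V}.
Arguments dist {R} s0 U.
Arguments sec {R} s0 U.

Record morphFP (R : realType) (S Q : sheafFP R) := MorphFP {
  mf : base S -> base Q;
  mf_cont : forall V : {set base Q}, V \in top (base Q) -> mf @^-1: V \in top (base S);
  mc : forall V : {set base Q}, sec S (mf @^-1: V) -> sec Q V;
  mc_cont : forall V : {set base Q}, V \in top (base Q) ->
    pcontinuous (dist S (mf @^-1: V)) (dist Q V) (@mc V);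
  mc_nat : forall (U V : {set base Q}) (h : U \subset V) (h' : mf @^-1: U \subset mf @^-1: V),
    U \in top (base Q) -> V \in top (base Q) ->
    forall s, res Q h (@mc V s) = @mc U (res S h' s) }.

Arguments mf {R S Q} m _.
Arguments mf_cont {R S Q} m V _.
Arguments mc {R S Q} m V _.

Definition assignment (R : realType) (S : sheafFP R) :=
  forall U : {set base S}, U \in top (base S) -> sec S U.

(* sup over the (finite, nonempty) set of opens of nonnegative reals *)
Definition assignD (R : realType) (S : sheafFP R) (a b : assignment S) : R :=
  \big[Num.max/0]_(W : opens (base S))
     dist S (val W) (a (val W) (valP W)) (b (val W) (valP W)).

(* the action of F on raw morphism data (f, continuity of f, components) *)
Definition Fraw (R : realType) (S Q : sheafFP R) (f : base S -> base Q)
  (hf : forall V : {set base Q}, V \in top (base Q) -> f @^-1: V \in top (base S))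
  (c : forall V : {set base Q}, sec S (f @^-1: V) -> sec Q V)
  (a : assignment S) : assignment Q :=
  fun V hV => c V (a (f @^-1: V) (hf V hV)).

Definition Fmor (R : realType) (S Q : sheafFP R) (m : morphFP S Q) :
  assignment S -> assignment Q := Fraw (mf_cont m) (mc m).

Lemma id_open (X : ftop) (V : {set X}) :
  V \in top X -> (@id X) @^-1: V \in top X.
Proof. by move=> hV; have -> : id @^-1: V = V by apply/setP=> x; rewrite inE. Qed.

Lemma sub_id_pre (X : finType) (U : {set X}) : U \subset (@id X) @^-1: U.
Proof. by apply/subsetP=> x; rewrite inE. Qed.

Definition id_comp (R : realType) (S : sheafFP R) (U : {set base S}) :
  sec S ((@id (base S)) @^-1: U) -> sec S U := res S (sub_id_pre U).

Lemma comp_open (X Y Z : ftop) (f : X -> Y) (g : Y -> Z)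
  (hf : forall V : {set Y}, V \in top Y -> f @^-1: V \in top X)
  (hg : forall V : {set Z}, V \in top Z -> g @^-1: V \in top Y) :
  forall V : {set Z}, V \in top Z -> (g \o f) @^-1: V \in top X.
Proof.
move=> V hV; have -> : (g \o f) @^-1: V = f @^-1: (g @^-1: V).
  by apply/setP=> x; rewrite !inE.
exact/hf/hg.
Qed.

Lemma sub_comp_pre (X Y Z : finType) (f : X -> Y) (g : Y -> Z) (U : {set Z}) :
  f @^-1: (g @^-1: U) \subset (g \o f) @^-1: U.
Proof. by apply/subsetP=> x; rewrite !inE. Qed.

Definition compM_open (R : realType) (S Q P : sheafFP R)
  (m : morphFP S Q) (n : morphFP Q P) :=
  comp_open (mf_cont m) (mf_cont n).

(* components of n o m : (n o m)_U = n_U o m_{g^{-1} U}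
   (precomposed with the identity identification
    S((g o f)^{-1} U) = S(f^{-1}(g^{-1} U)) ) *)
Definition comp_comp (R : realType) (S Q P : sheafFP R)
  (m : morphFP S Q) (n : morphFP Q P) (U : {set base P}) :
  sec S ((mf n \o mf m) @^-1: U) -> sec P U :=
  fun s => mc n U (mc m (mf n @^-1: U) (res S (sub_comp_pre (mf m) (mf n) U) s)).

Arguments comp_comp {R S Q P} m n U _.
Arguments compM_open {R S Q P} m n _ _.
Arguments id_comp {R} S U _.
Arguments Fmor {R S Q} m _ _ _.
Arguments Fraw {R S Q} f hf c a _ _.

(* Each open set contributes one term to the assignment pseudometric, and there
   are only finitely many open sets; so the pseudometric axioms pass to the
   maximum termwise, and continuity of Fm follows from continuity of the finitely
   many components m_V by taking the least of the radii they provide.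
   Functoriality is pointwise: the sections involved are evaluated at equal open
   sets, on which restriction is the identity. *)
From HB Require Import structures.
From mathcomp Require Import all_boot all_order all_algebra.
From mathcomp Require Import reals.
From Stdlib Require Import FunctionalExtensionality.
Import Order.TTheory GRing.Theory Num.Theory.
Local Open Scope ring_scope.

Section PseudometricContinuity.
Context {R : realType} {A B : Type} {dA : A -> A -> R} {dB : B -> B -> R}.

Lemma popen_ball (c : B) (e : R) :
  is_pseudometric dB -> popen dB (fun t => dB c t < e).
Proof.
case=> _ _ _ tri t ct_lt_e; exists (e - dB c t); first by rewrite subr_gt0.
by move=> u tu_lt; apply: le_lt_trans (tri c t u) _; rewrite -ltrBrDl.
Qed.

Lemma pcontinuous_ball (h : A -> B) :
  is_pseudometric dB -> pcontinuous dA dB h ->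
  forall x e, 0 < e -> exists2 d, 0 < d & forall y, dA x y < d -> dB (h x) (h y) < e.
Proof.
move=> dB_pm h_cont x e e_gt0.
have [|d d_gt0 hd] := h_cont _ (popen_ball (h x) e dB_pm) x.
  by case: dB_pm => -> *.
by exists d.
Qed.

Lemma ball_pcontinuous (h : A -> B) :
  (forall x e, 0 < e -> exists2 d, 0 < d & forall y, dA x y < d -> dB (h x) (h y) < e) ->
  pcontinuous dA dB h.
Proof.
move=> h_ball O O_open x Ohx.
have [e e_gt0 ballO] := O_open _ Ohx.
have [d d_gt0 hd] := h_ball x e e_gt0.
by exists d => // y /hd /ballO.
Qed.

End PseudometricContinuity.

Lemma finite_common_radius (R : realType) (I : finType) (P : I -> R -> Prop) :
  (forall i d d', 0 < d' -> d' <= d -> P i d -> P i d') ->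
  (forall i, exists2 d, 0 < d & P i d) ->
  exists2 d, 0 < d & forall i, P i d.
Proof.
move=> P_shrink P_ex.
suff [d d_gt0 hd] : exists2 d, 0 < d & forall i, i \in enum I -> P i d.
  by exists d => // i; apply: hd; rewrite mem_enum.
elim: (enum I) => [|j s [d d_gt0 hd]]; first by exists 1.
have [dj dj_gt0 hdj] := P_ex j.
have min_gt0 : 0 < Num.min d dj by rewrite lt_min d_gt0 dj_gt0.
exists (Num.min d dj) => // i; rewrite inE => /orP[/eqP-> | i_s].
  by apply: (P_shrink _ dj); rewrite ?ge_min ?lexx ?orbT.
by apply: (P_shrink _ d); rewrite ?ge_min ?lexx //; apply: hd.
Qed.

Section AssignmentPseudometric.
Context {R : realType} {S : sheafFP R}.
Implicit Types a b c : assignment S.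

Lemma dist_le_assignD a b (U : {set base S}) (hU : U \in top (base S)) :
  dist S U (a U hU) (b U hU) <= assignD a b.
Proof.
have := le_bigmax 0 (fun W : opens (base S) =>
  dist S (val W) (a (val W) (valP W)) (b (val W) (valP W))) (exist _ U hU).
by rewrite /=; move: (valP _) => hU'; rewrite (bool_irrelevance hU' hU).
Qed.

Lemma assignD_ge0 a b : 0 <= assignD a b.
Proof. exact: bigmax_ge_id. Qed.

Lemma assignDxx a : assignD a a = 0.
Proof.
apply/le_anti; rewrite assignD_ge0 andbT.
by apply: bigmax_le => // W _; case: (dist_pseudo (valP W)) => ->.
Qed.

Lemma assignDC a b : assignD a b = assignD b a.
Proof.
by apply: eq_bigr => W _; case: (dist_pseudo (valP W)) => _ _ ->.
Qed.

Lemma assignD_triangle a b c : assignD a c <= assignD a b + assignD b c.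
Proof.
apply: bigmax_le => [|W _]; first by rewrite addr_ge0 ?assignD_ge0.
case: (dist_pseudo (valP W)) => _ _ _ tri.
by apply: le_trans (tri _ (b (val W) (valP W)) _) _; rewrite lerD ?dist_le_assignD.
Qed.

Lemma assignD_pseudometric : is_pseudometric (@assignD R S).
Proof. by split; [exact: assignDxx | exact: assignD_ge0 | exact: assignDC
                 | exact: assignD_triangle]. Qed.

Lemma res_assignment (U W : {set base S}) (hUW : U \subset W) a hU hW :
  U = W -> res S hUW (a W hW) = a U hU.
Proof.
by move=> eUW; subst W; rewrite res_id //; congr (a U _); apply: bool_irrelevance.
Qed.

End AssignmentPseudometric.

Lemma Fmor_continuous (R : realType) (S Q : sheafFP R) (m : morphFP S Q) :
  pcontinuous (@assignD R S) (@assignD R Q) (Fmor m).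
Proof.
apply: ball_pcontinuous => a e e_gt0.
pose close (W : opens (base Q)) d := forall b : assignment S, assignD a b < d ->
  dist Q (val W) (Fmor m a (val W) (valP W)) (Fmor m b (val W) (valP W)) < e.
have [d d_gt0 hd] : exists2 d, 0 < d & forall W, close W d.
  apply: finite_common_radius => [W d d' _ d'_le_d hd b ab_lt|W].
    by apply: hd; apply: lt_le_trans d'_le_d.
  have [dW dW_gt0 hdW] := pcontinuous_ball _ (dist_pseudo (valP W))
    (@mc_cont _ _ _ m _ (valP W)) (a _ (mf_cont m _ (valP W))) _ e_gt0.
  exists dW => // b ab_lt; apply: (hdW (b _ (mf_cont m _ (valP W)))).
  by apply: le_lt_trans ab_lt; apply: dist_le_assignD.
by exists d => // b ab_lt; apply: bigmax_lt => // W _; apply: hd.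
Qed.

Lemma Fraw_id (R : realType) (S : sheafFP R) (a : assignment S) :
  Fraw (@id (base S)) (@id_open (base S)) (id_comp S) a = a.
Proof.
apply: functional_extensionality_dep => V; apply: functional_extensionality_dep => hV.
by apply: res_assignment; apply/setP => x; rewrite inE.
Qed.

Lemma Fraw_comp (R : realType) (S Q P : sheafFP R) (m : morphFP S Q)
    (n : morphFP Q P) (a : assignment S) :
  Fraw (mf n \o mf m) (compM_open m n) (comp_comp m n) a = Fmor n (Fmor m a).
Proof.
apply: functional_extensionality_dep => V; apply: functional_extensionality_dep => hV.
rewrite /Fmor /Fraw /comp_comp; congr (mc n V (mc m _ _)).
by apply: res_assignment; apply/setP => x; rewrite !inE.
Qed.

Theorem proposition16 (R : realType) :
  (* F S = (assignments of S, assignment pseudometric) is a pseudometric space *)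
  (forall S : sheafFP R, is_pseudometric (@assignD R S)) /\
  (* each F m is continuous *)
  (forall (S Q : sheafFP R) (m : morphFP S Q),
      pcontinuous (@assignD R S) (@assignD R Q) (Fmor m)) /\
  (* F preserves identities *)
  (forall (S : sheafFP R) (a : assignment S),
      Fraw (@id (base S)) (@id_open (base S)) (id_comp S) a = a) /\
  (* F preserves composition *)
  (forall (S Q P : sheafFP R) (m : morphFP S Q) (n : morphFP Q P)
          (a : assignment S),
      Fraw (mf n \o mf m) (compM_open m n) (comp_comp m n) a = Fmor n (Fmor m a)).
Proof.
split; first by move=> S; exact: assignD_pseudometric.
split; first exact: Fmor_continuous.
split; first exact: Fraw_id.
exact: Fraw_comp.
Qed.
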